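(* Let $\Gamma$ be an edge-regular graph that has a regular clique, and suppose that $\Gamma$ is not strongly regular. Then $\Gamma$ has a regular clique of order at least $4$.
   Context: A graph is edge-regular if it is non-empty, $k$-regular for some $k$, and every two adjacent vertices have exactly $\lambda$ common neighbours for some constant $\lambda$. It is strongly regular if moreover every two distinct non-adjacent vertices have exactly $\mu$ common neighbours for some constant $\mu$. A clique $\mathcal C$ is regular if every vertex not in $\mathcal C$ is adjacent to the same number $e>0$ of vertices of $\mathcal C$. *)

From mathcomp Require Import all_boot.
Set Implicit Arguments. Unset Strict Implicit. Unset Printing Implicit Defensive.

Definition simple_graph (T : finType) (e : rel T) : Prop :=
  symmetric e /\ irreflexive e.

Definition nbhd (T : finType) (e : rel T) (x : T) : {set T} := [set y | e x y].

Definition common_nb (T : finType) (e : rel T) (x y : T) : nat :=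
  #|nbhd e x :&: nbhd e y|.

Definition k_regular (T : finType) (e : rel T) (k : nat) : Prop :=
  forall x : T, #|nbhd e x| = k.

Definition edge_regular (T : finType) (e : rel T) : Prop :=
  (exists x y : T, e x y) /\
  (exists k, k_regular e k) /\
  (exists lam, forall x y : T, e x y -> common_nb e x y = lam).

Definition strongly_regular (T : finType) (e : rel T) : Prop :=
  edge_regular e /\
  (exists mu, forall x y : T, x != y -> ~~ e x y -> common_nb e x y = mu).

Definition is_clique (T : finType) (e : rel T) (C : {set T}) : Prop :=
  forall x y, x \in C -> y \in C -> x != y -> e x y.

Definition regular_clique (T : finType) (e : rel T) (C : {set T}) : Prop :=
  is_clique e C /\
  exists2 m : nat, 0 < m &
    forall x, x \notin C -> #|[set y in C | e x y]| = m.

(* Let C be a regular clique of an edge-regular graph with parameters (k, lam)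
   such that |C| <= 3, every vertex outside C seeing m > 0 vertices of C.
   Unless |C| = 3 and m = 1, C contains an edge xy such that every vertex is
   adjacent to x or y.  Since |N(x) u N(y)| = 2k - lam for every edge, every
   edge then dominates, so a vertex w not adjacent to u is adjacent to all
   neighbours of u, and mu = k.  If |C| = 3 and m = 1, then lam = 1 and the
   neighbourhoods of the triangle C cover the graph; by inclusion-exclusion the
   same holds for every triangle.  The neighbours of u then split into pairs
   {t, t'} spanning the triangles through u, and w is adjacent to exactly one
   vertex of each pair, so mu = k/2.  Either way the graph would be strongly
   regular. *)

From mathcomp Require Import all_boot zify.

Set Implicit Arguments.
Unset Strict Implicit.
Unset Printing Implicit Defensive.

Section Graph.

Variables (T : finType) (e : rel T).
Hypotheses (e_sym : symmetric e) (e_irr : irreflexive e).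

Local Notation N := (nbhd e).

Lemma in_nbhd x y : (y \in N x) = e x y.
Proof. by rewrite inE. Qed.

Lemma nbhd_subset_nonadj u w :
  (forall t, e u t -> forall v, e u v || e t v) -> ~~ e u w -> N u \subset N w.
Proof.
move=> dom nuw; apply/subsetP=> t; rewrite !in_nbhd => ut.
by have := dom t ut w; rewrite (negbTE nuw) e_sym.
Qed.

Section UniqueTriangles.

Hypothesis lam1 : forall x y, e x y -> common_nb e x y = 1.

Lemma nbhdI_triangle a b c : e a b -> e a c -> e b c -> N a :&: N b = [set c].
Proof.
move=> eab eac ebc; have /eqP/cards1P [d Id] := lam1 eab.
have : c \in N a :&: N b by rewrite in_setI !in_nbhd eac ebc.
by rewrite Id in_set1 => /eqP ->.
Qed.

(* The third vertex of the unique triangle on the edge ut (junk value u when u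
   and t have no common neighbour). *)
Definition apex u t := odflt u [pick s in N u :&: N t].

Lemma nbhdI_apex u t : e u t -> N u :&: N t = [set apex u t].
Proof.
move=> ut; have /eqP/cards1P [c Ic] := lam1 ut.
by rewrite /apex Ic; case: pickP => [s /set1P -> // | /(_ c)]; rewrite in_set1 eqxx.
Qed.

Lemma apex_adjl u t : e u t -> e u (apex u t).
Proof.
by move=> ut; have := set11 (apex u t); rewrite -nbhdI_apex // !inE => /andP [].
Qed.

Lemma apex_adjr u t : e u t -> e t (apex u t).
Proof.
by move=> ut; have := set11 (apex u t); rewrite -nbhdI_apex // !inE => /andP [].
Qed.

Lemma apexK u t : e u t -> apex u (apex u t) = t.
Proof.
move=> ut; have : t \in N u :&: N (apex u t).
  by rewrite in_setI !in_nbhd ut e_sym apex_adjr.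
by rewrite nbhdI_apex ?apex_adjl // in_set1 => /eqP.
Qed.

Lemma card_nbhd_nonadj u w :
  (forall t s, e u t -> e u s -> e t s -> forall v, e u v || e t v || e s v) ->
  u != w -> ~~ e u w -> #|N u| = (common_nb e u w).*2.
Proof.
move=> dom uw nuw.
have apex_xor t : e u t -> e w (apex u t) = ~~ e w t.
  move=> ut; have uf := apex_adjl ut; have tf := apex_adjr ut.
  apply/idP/idP => [wf | nwt].
    apply/negP=> wt; have : w \in N t :&: N (apex u t).
      by rewrite in_setI !in_nbhd !(e_sym _ w) wt wf.
    by rewrite (nbhdI_triangle (c := u) tf) ?(e_sym _ u) // in_set1 eq_sym (negbTE uw).
  have := dom t (apex u t) ut uf tf w.
  by rewrite (negbTE nuw) (e_sym t) (negbTE nwt) e_sym.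
have imS : N u :\: N w = apex u @: (N u :&: N w).
  apply/setP=> t; rewrite in_setD !in_nbhd; apply/andP/imsetP => [[nwt ut] | [s]].
    exists (apex u t); last by rewrite apexK.
    by rewrite in_setI !in_nbhd apex_adjl // apex_xor.
  by rewrite in_setI !in_nbhd => /andP [us ws] ->; rewrite apex_xor // ws apex_adjl.
have inj : {in N u :&: N w &, injective (apex u)}.
  move=> t s; rewrite !in_setI !in_nbhd => /andP [ut _] /andP [us _] ts.
  by rewrite -(apexK ut) ts apexK.
by rewrite -(cardsID (N w) (N u)) imS card_in_imset // addnn.
Qed.

Section Regular.

Variable k : nat.
Hypothesis reg : k_regular e k.

Lemma card_nbhdU3 a b c :
  e a b -> e a c -> e b c -> #|N a :|: N b :|: N c| + 3 = 3 * k.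
Proof.
move=> eab eac ebc.
have := cardsUI (N a) (N b); rewrite (nbhdI_triangle eab eac ebc) cards1 !reg.
have := cardsUI (N a :|: N b) (N c).
rewrite setIUl (nbhdI_triangle eac eab) ?(e_sym c) //.
rewrite (nbhdI_triangle (c := a) ebc) ?(e_sym _ a) // cards2 reg.
have ba : b != a by apply: contraTneq eab => ->; rewrite e_irr.
by rewrite ba; lia.
Qed.

Lemma dominating_triangle_transfer x y z a b c :
  e x y -> e x z -> e y z -> (forall w, e x w || e y w || e z w) ->
  e a b -> e a c -> e b c -> forall w, e a w || e b w || e c w.
Proof.
move=> exy exz eyz domxyz eab eac ebc w.
have coverxyz : N x :|: N y :|: N z = setT.
  by apply/setP=> v; rewrite !in_setU !in_nbhd in_setT domxyz.
have : N a :|: N b :|: N c = setT.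
  apply/eqP; rewrite eqEcard subsetT -coverxyz.
  by have := card_nbhdU3 exy exz eyz; have := card_nbhdU3 eab eac ebc; lia.
by move/setP/(_ w); rewrite !in_setU !in_nbhd in_setT.
Qed.

Lemma common_nb_dominating_triangle x y z u w :
  e x y -> e x z -> e y z -> (forall v, e x v || e y v || e z v) ->
  u != w -> ~~ e u w -> common_nb e u w = k./2.
Proof.
move=> exy exz eyz dom uw nuw.
rewrite -(reg u) (card_nbhd_nonadj _ uw nuw) ?doubleK // => t s.
exact: dominating_triangle_transfer exy exz eyz dom.
Qed.

End Regular.

End UniqueTriangles.

Section EdgeRegular.

Variables (k lam : nat).
Hypothesis reg : k_regular e k.
Hypothesis hlam : forall x y, e x y -> common_nb e x y = lam.

Lemma card_nbhdU2 x y : e x y -> #|N x :|: N y| + lam = k + k.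
Proof. by move=> exy; rewrite -(hlam exy) /common_nb cardsUI !reg. Qed.

Lemma dominating_edge_transfer x y u t :
  e x y -> (forall w, e x w || e y w) -> e u t -> forall w, e u w || e t w.
Proof.
move=> exy domxy ut w.
have coverxy : N x :|: N y = setT.
  by apply/setP=> v; rewrite in_setU !in_nbhd in_setT domxy.
have : N u :|: N t = setT.
  apply/eqP; rewrite eqEcard subsetT -coverxy.
  by have := card_nbhdU2 exy; have := card_nbhdU2 ut; lia.
by move/setP/(_ w); rewrite in_setU !in_nbhd in_setT.
Qed.

Lemma common_nb_dominating_edge x y u w :
  e x y -> (forall v, e x v || e y v) -> ~~ e u w -> common_nb e u w = k.
Proof.
move=> exy dom nuw.
have /setIidPl NuI := nbhd_subset_nonadj (fun t => dominating_edge_transfer exy dom) nuw.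
by rewrite /common_nb NuI reg.
Qed.

End EdgeRegular.

Section Cliques.

Variable C : {set T}.

Lemma regular_clique_adj w :
  regular_clique e C -> w \notin C -> exists2 c, c \in C & e w c.
Proof.
move=> [_ [m m_gt0 hm]] wC; move: m_gt0; rewrite -(hm w wC) => /card_gt0P [c].
by rewrite inE => /andP [cC wc]; exists c.
Qed.

Lemma clique_edge_dominating x y :
  is_clique e C -> x \in C -> y \in C -> x != y ->
  (forall w, w \notin C -> #|C| < #|[set t in C | e w t]| + 2) ->
  forall w, e x w || e y w.
Proof.
move=> clqC xC yC xy many w.
case: (eqVneq w x) => [-> | wx]; first by rewrite (clqC _ _ yC xC) ?orbT // eq_sym.
have [wC | wC] := boolP (w \in C); first by rewrite (clqC _ _ xC wC) // eq_sym.
apply/negPn/negP; rewrite negb_or => /andP [nxw nyw].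
have : [set t in C | e w t] \subset C :\: [set x; y].
  apply/subsetP=> t; rewrite !inE => /andP [tC wt]; rewrite tC andbT.
  by apply/norP; split; apply/eqP => tE; [move: nxw | move: nyw]; rewrite -tE e_sym wt.
have xyC : [set x; y] \subset C by apply/subsetP=> t; rewrite !inE => /orP [] /eqP ->.
move/subset_leq_card; rewrite cardsDS //; have := subset_leq_card xyC.
by have := many w wC; rewrite cards2 xy /=; lia.
Qed.

Lemma clique_nbhdI x y :
  is_clique e C -> (forall w, w \notin C -> #|[set t in C | e w t]| <= 1) ->
  x \in C -> y \in C -> x != y -> N x :&: N y = C :\: [set x; y].
Proof.
move=> clqC few xC yC xy; apply/setP=> w; rewrite in_setI !in_nbhd !inE.
case: (eqVneq w x) => [-> | wx]; first by rewrite e_irr.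
case: (eqVneq w y) => [-> | wy]; first by rewrite e_irr andbF.
have [wC | wC] /= := boolP (w \in C); first by rewrite !clqC // eq_sym.
apply/negP=> /andP [xw yw]; have := few w wC.
have : [set x; y] \subset [set t in C | e w t].
  by apply/subsetP=> t; rewrite !inE => /orP [] /eqP ->; rewrite ?xC ?yC !(e_sym w).
by move/subset_leq_card; rewrite cards2 xy; lia.
Qed.

Lemma dominating_edge_of_clique_le1 k a b :
  k_regular e k -> e a b -> regular_clique e C -> #|C| <= 1 ->
  exists x y, e x y /\ forall w, e x w || e y w.
Proof.
move=> reg eab regC C_le1.
have [x xC] : exists x, x \in C.
  have [aC | aC] := boolP (a \in C); first by exists a.
  by have [c cC _] := regular_clique_adj regC aC; exists c.
have Cx w : w \in C -> w = x by move=> wC; exact: (card_le1_eqP C_le1).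
have [y xy] : exists y, e x y.
  have : 0 < #|N x| by rewrite reg -(reg a); apply/card_gt0P; exists b; rewrite in_nbhd.
  by case/card_gt0P=> y; rewrite in_nbhd; exists y.
exists x, y; split=> // w.
case: (eqVneq w x) => [-> | wx]; first by rewrite (e_sym y) xy orbT.
have wC : w \notin C by apply: contra wx => /Cx ->.
by have [c /Cx -> wc] := regular_clique_adj regC wC; rewrite e_sym wc.
Qed.

Lemma dominating_triangle_of_clique3 :
  is_clique e C -> (forall w, w \notin C -> #|[set t in C | e w t]| = 1) -> #|C| = 3 ->
  exists x y z, [/\ e x y, e x z, e y z, forall w, e x w || e y w || e z w
                  & N x :&: N y = [set z]].
Proof.
move=> clqC one C3.
have [x [y [xC yC xy]]] : exists x y, [/\ x \in C, y \in C & x != y].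
  by apply/card_gt1P; rewrite C3.
have xyC : [set x; y] \subset C by apply/subsetP=> t; rewrite !inE => /orP [] /eqP ->.
have /cards1P [z Cz] : #|C :\: [set x; y]| == 1 by rewrite cardsDS // cards2 xy C3.
have Ixy : N x :&: N y = [set z].
  by rewrite -Cz; apply: clique_nbhdI => // w wC; rewrite one.
have /andP [xz yz] : e x z && e y z by rewrite -!in_nbhd -in_setI Ixy set11.
exists x, y, z; split=> //; first exact: clqC.
move=> w; case: (eqVneq w x) => [-> | wx].
  by rewrite (clqC _ _ yC xC) ?orbT // eq_sym.
have [wC | wC] := boolP (w \in C); first by rewrite (clqC _ _ xC wC) // eq_sym.
have regC : regular_clique e C by split=> //; exists 1.
have [c cC wc] := regular_clique_adj regC wC.
case: (eqVneq c x) => [<- | cx]; first by rewrite e_sym wc.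
case: (eqVneq c y) => [<- | cy]; first by rewrite (e_sym c) wc orbT.
have : c \in C :\: [set x; y] by rewrite !inE negb_or cx cy.
by rewrite Cz in_set1 => /eqP <-; rewrite (e_sym c) wc orbT.
Qed.

Lemma small_regular_clique_dominating k a b :
  k_regular e k -> e a b -> regular_clique e C -> #|C| < 4 ->
  (exists x y, e x y /\ forall w, e x w || e y w) \/
  (exists x y z, [/\ e x y, e x z, e y z, forall w, e x w || e y w || e z w
                  & N x :&: N y = [set z]]).
Proof.
move=> reg eab regC C_lt4; have [clqC [m m_gt0 hm]] := regC.
have [C_le1 | C_gt1] := leqP #|C| 1.
  by left; exact: dominating_edge_of_clique_le1 reg eab regC C_le1.
have [C_lt | C_ge] := ltnP #|C| (m + 2).
  have [x [y [xC yC xy]]] := card_gt1P C_gt1.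
  left; exists x, y; split; first exact: clqC.
  by apply: clique_edge_dominating => // w wC; rewrite hm.
by right; apply: dominating_triangle_of_clique3 => // [w wC | ]; rewrite ?hm; lia.
Qed.

End Cliques.

End Graph.

Theorem proposition5p2 (T : finType) (e : rel T) :
  simple_graph e ->
  edge_regular e ->
  (exists C : {set T}, regular_clique e C) ->
  ~ strongly_regular e ->
  exists C : {set T}, regular_clique e C /\ 4 <= #|C|.
Proof.
move=> [e_sym e_irr] er [C regC] not_srg.
have [[a [b eab]] [[k reg] [lam hlam]]] := er.
have [C_ge4 | C_lt4] := leqP 4 #|C|; first by exists C.
case: not_srg; split=> //.
have [[x [y [exy dom]]] | [x [y [z [exy exz eyz dom Ixy]]]]] :=
  small_regular_clique_dominating e_sym e_irr reg eab regC C_lt4.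
  by exists k => u w _; exact: (common_nb_dominating_edge e_sym reg hlam exy dom).
have lam1 u t : e u t -> common_nb e u t = 1.
  by move=> ut; rewrite hlam // -(hlam _ _ exy) /common_nb Ixy cards1.
exists k./2 => u w.
exact: (common_nb_dominating_triangle e_sym e_irr lam1 reg exy exz eyz dom).
Qed.
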